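(* Let $X$ be a finite connected poset of length $1$. Then $\mathcal{M}(X)=\mathcal{P}(X)$ if and only if $|\mathrm{Min}(X)|=1$ or $|\mathrm{Max}(X)|=1$.
   Context: The length of $X$ is the maximum of $|C|-1$ over chains $C\subseteq X$. $\mathrm{Min}(X)$, $\mathrm{Max}(X)$ are the sets of minimal and maximal elements. For $x<y$, $e_{xy}$ denotes the incidence-algebra basis element and $B=\{e_{xy}:x<y\}$. $\mathcal{C}(X)$ is the set of maximal chains. For a bijection $\theta:B\to B$ and $C:u_1<\dots<u_m$ in $\mathcal{C}(X)$, $\theta$ is increasing on $C$ if there is $D:v_1<\dots<v_m$ in $\mathcal{C}(X)$ with $\theta(e_{u_iu_j})=e_{v_iv_j}$ for all $i<j$, decreasing if $\theta(e_{u_iu_j})=e_{v_{m-j+1}v_{m-i+1}}$ for all $i<j$. $\mathcal{M}(X)$ is the set of bijections $B\to B$ increasing or decreasing on every maximal chain. $\theta:B\to B$ is proper if there is an automorphism $\lambda$ of $X$ with $\theta(e_{xy})=e_{\lambda(x)\lambda(y)}$ for all $x<y$, or an anti-automorphism $\lambda$ of $X$ with $\theta(e_{xy})=e_{\lambda(y)\lambda(x)}$ for all $x<y$; $\mathcal{P}(X)$ is the set of proper bijections. *)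

From HB Require Import structures.
From mathcomp Require Import all_boot all_order fingroup perm.
Set Implicit Arguments. Unset Strict Implicit. Unset Printing Implicit Defensive.
Import Order.Theory.
Local Open Scope order_scope.

Section PosetDefs.
Context {d : Order.disp_t} (X : finPOrderType d).

Definition is_chain (C : {set X}) : bool :=
  [forall x in C, forall y in C, x >=< y].

Definition poset_length : nat := (\max_(C : {set X} | is_chain C) #|C|).-1.

Definition poset_connected : Prop :=
  forall x y : X, connect (fun a b : X => a >=< b) x y.

Definition Min_set : {set X} := [set x : X | [forall y : X, ~~ (y < x)]].
Definition Max_set : {set X} := [set x : X | [forall y : X, ~~ (x < y)]].

Definition is_maxchain (C : {set X}) : bool :=
  is_chain C && [forall D : {set X}, (C \proper D) ==> ~~ is_chain D].

(* a maximal chain u_1 < ... < u_m, given as its strictly increasing listing *)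
Definition maxchain_seq (s : seq X) : bool :=
  sorted <%O s && is_maxchain [set x in s].

(* B = {e_xy : x < y}, e_xy represented by the pair (x, y) *)
Definition Bt : finType := {p : X * X | p.1 < p.2}.

(* theta increasing on the maximal chain s (0-indexed):
   exists maximal chain t with theta(e_{s_i s_j}) = e_{t_i t_j} for i < j *)
Definition increasing_on (th : Bt -> Bt) (s : seq X) : Prop :=
  exists t : seq X, [/\ maxchain_seq t, size t = size s &
    forall (b : Bt) (i j : nat), i < j < size s ->
      val b = (nth (val b).1 s i, nth (val b).1 s j) ->
      val (th b) = (nth (val b).1 t i, nth (val b).1 t j)]%N.

(* decreasing: theta(e_{u_i u_j}) = e_{v_{m-j+1} v_{m-i+1}} (1-indexed),
   i.e. 0-indexed e_{t_(m-1-j) t_(m-1-i)} *)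
Definition decreasing_on (th : Bt -> Bt) (s : seq X) : Prop :=
  exists t : seq X, [/\ maxchain_seq t, size t = size s &
    forall (b : Bt) (i j : nat), i < j < size s ->
      val b = (nth (val b).1 s i, nth (val b).1 s j) ->
      val (th b) = (nth (val b).1 t (size s - 1 - j),
                    nth (val b).1 t (size s - 1 - i))]%N.

Definition in_M (th : Bt -> Bt) : Prop :=
  forall s : seq X, maxchain_seq s -> increasing_on th s \/ decreasing_on th s.

Definition in_P (th : Bt -> Bt) : Prop :=
  (exists lam : {perm X}, (forall x y : X, (lam x <= lam y) = (x <= y)) /\
     forall b : Bt, val (th b) = (lam (val b).1, lam (val b).2)) \/
  (exists lam : {perm X}, (forall x y : X, (lam x <= lam y) = (y <= x)) /\
     forall b : Bt, val (th b) = (lam (val b).2, lam (val b).1)).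

End PosetDefs.

(* In a connected poset of length one every maximal chain is a single pair x < y, on
   which every bijection of B is increasing, so M(X) consists of all bijections and the
   question is when all of them are proper.  If Min(X) = {r}, every element other than r
   lies above r and every edge is some e_{r y}; a bijection theta is then induced by the
   automorphism fixing r and sending y to the top of theta(e_{r y}).  The case
   Max(X) = {r} is the same statement for the dual order.  Conversely, a zigzag
   a1 < b1 > a2 < b2 with a1 <> a2 and b1 <> b2 makes the transposition of e_{a1 b1} and
   e_{a2 b1} improper, and a connected zigzag-free poset of length one is a star: given
   a < b, everything lies below b if b has a second lower neighbour, and above a if not. *)

From HB Require Import structures.
From mathcomp Require Import all_boot all_order fingroup perm.
Import Order.Theory.
Set Implicit Arguments. Unset Strict Implicit. Unset Printing Implicit Defensive.
Local Open Scope order_scope.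

Section Posets.
Context {d : Order.disp_t} (X : finPOrderType d).

Definition no_chain3 : Prop := forall x y z : X, x < y -> y < z -> False.

Definition zigzag_free : Prop :=
  forall a1 b1 a2 b2 : X, a1 < b1 -> a2 < b1 -> a2 < b2 -> (a1 == a2) || (b1 == b2).

Lemma is_chain2 (x y : X) : x >=< y -> is_chain [set x; y].
Proof.
move=> xy; apply/forallP => u; apply/implyP; rewrite !inE => /orP[]/eqP->;
  apply/forallP => v; apply/implyP; rewrite !inE => /orP[]/eqP->;
  by rewrite ?comparablexx // comparable_sym.
Qed.

Lemma is_chain3 (x y z : X) : x < y -> y < z -> is_chain [set x; y; z].
Proof.
move=> xy yz; have xz := lt_trans xy yz.
apply/forallP => u; apply/implyP; rewrite !inE => /orP[/orP[]|]/eqP->;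
  apply/forallP => v; apply/implyP; rewrite !inE => /orP[/orP[]|]/eqP->;
  by rewrite ?comparablexx // /Order.comparable ?(ltW xy) ?(ltW yz) ?(ltW xz) ?orbT.
Qed.

Lemma connected_closed (P : pred X) : poset_connected X ->
  (forall x y, P x -> x >=< y -> P y) -> forall a z, P a -> P z.
Proof.
move=> conn PC a z Pa; have clP : closed (fun x y : X => x >=< y) P.
  by move=> x y xy; apply/idP/idP => /PC; apply; rewrite // comparable_sym.
by have := closed_connect clP (conn a z); rewrite !unfold_in /= => <-.
Qed.

Lemma Min_set_bottom (r : X) : (forall x, r <= x) -> Min_set X = [set r].
Proof.
move=> rle; apply/setP => x; rewrite !inE; apply/forallP/eqP => [xmin | -> y].
  by apply/eqP; rewrite eq_le rle andbT; have := xmin r; rewrite lt_leAnge rle negbK.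
by rewrite lt_leAnge rle andbF.
Qed.

End Posets.

Section LengthOne.
Context {d : Order.disp_t} (X : finPOrderType d).
Hypothesis len1 : poset_length X = 1%N.

Lemma length1_max_chain_card : \max_(C : {set X} | is_chain C) #|C| = 2%N.
Proof. by move: len1; rewrite /poset_length; case: (\max_(_ | _) _) => [|[|[|n]]]. Qed.

Lemma chain_card_le2 (C : {set X}) : is_chain C -> (#|C| <= 2)%N.
Proof. by rewrite -length1_max_chain_card; apply: leq_bigmax_cond. Qed.

Lemma length1_no_chain3 : no_chain3 X.
Proof.
move=> x y z xy yz; have := chain_card_le2 (is_chain3 xy yz).
by rewrite -setUA cardsU1 cards2 !inE (lt_eqF xy) (lt_eqF yz) (lt_eqF (lt_trans xy yz)).
Qed.

Lemma length1_exists_lt : exists a b : X, a < b.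
Proof.
have chain0 : is_chain (set0 : {set X}) by apply/forallP => x; rewrite inE.
have := bigop.bigmax_eq_arg (F := fun C : {set X} => #|C|) _ chain0.
rewrite length1_max_chain_card; case: arg_maxnP => // C C_chain _.
move/esym/eqP/cards2P => [x [y [xy CE]]].
move: C_chain => /forallP /(_ x); rewrite CE !inE eqxx /= => /forallP /(_ y).
rewrite !inE eqxx orbT /=; case/comparable_ltgtP => [|yx|xy']; first by exists x, y.
  by exists y, x.
by rewrite xy' eqxx in xy.
Qed.

Lemma maxchain_seq_pair (x y : X) : x < y -> maxchain_seq [:: x; y].
Proof.
move=> xy; rewrite /maxchain_seq /= xy /is_maxchain.
have -> : [set z in [:: x; y]] = [set x; y] by apply/setP => z; rewrite !inE.
rewrite is_chain2 ?/Order.comparable ?(ltW xy) //=; apply/forallP => D.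
apply/implyP => /proper_card; rewrite cards2 (lt_eqF xy) => ltD.
by apply: contraL ltD => /chain_card_le2; rewrite leqNgt.
Qed.

Hypothesis conn : poset_connected X.

Lemma exists_comparable_neq (x : X) : exists2 y, y != x & x >=< y.
Proof.
case: (boolP [exists y, (y != x) && (x >=< y)]) => [/existsP [y /andP []]|].
  by exists y.
move=> /existsPn none.
have all_x z : z == x.
  apply: (@connected_closed _ X (pred1 x) conn _ x z (eqxx x)) => u w /eqP -> {u} xw.
  by apply: contraT => wx; have := none w; rewrite wx xw.
have [a [b]] := length1_exists_lt.
by rewrite (eqP (all_x a)) (eqP (all_x b)) ltxx.
Qed.

Lemma maxchain_seqE (s : seq X) : maxchain_seq s -> exists x y, x < y /\ s = [:: x; y].
Proof.
move=> /andP [s_sorted /andP [_ /forallP s_max]].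
have {s_max} no_ext (D : {set X}) : [set x in s] \proper D -> is_chain D -> False.
  by move=> sD; move: (s_max D); rewrite sD => /negP.
case: s s_sorted no_ext => [|x [|y [|z s]]] /= s_sorted no_ext.
- have [a [b /ltW ab]] := length1_exists_lt.
  case: (no_ext [set a; b]); last exact: is_chain2 (le_comparable ab).
  by apply/properP; split; [apply/subsetP => u; rewrite inE | exists a; rewrite !inE ?eqxx].
- have [y yx xy] := exists_comparable_neq x.
  case: (no_ext [set x; y]); last exact: is_chain2.
  apply/properP; split; first by apply/subsetP => u; rewrite !inE => ->.
  by exists y; rewrite !inE ?eqxx ?orbT // (negbTE yx).
- by move: s_sorted; rewrite andbT => xy; exists x, y.
- by case/and3P: s_sorted => xy yz _; case: (length1_no_chain3 xy yz).
Qed.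

Lemma in_M_all (th : Bt X -> Bt X) : in_M th.
Proof.
move=> s /maxchain_seqE [x [y [xy ->]]]; left.
pose e : Bt X := Sub (x, y) xy.
exists [:: (val (th e)).1; (val (th e)).2]; split => //.
  exact: maxchain_seq_pair (valP (th e)).
move=> b i j /andP [ij]; case: j ij => [|[|j]] //; case: i => // _ _ be.
have -> : b = e by apply: val_inj.
by case: (val (th e)).
Qed.

End LengthOne.

Section BottomStar.
Context {d : Order.disp_t} (X : finPOrderType d) (r : X).
Hypothesis r_le : forall x, r <= x.
Hypothesis no3 : no_chain3 X.

Lemma lt_bottom_fst (x y : X) : x < y -> x = r.
Proof.
move=> xy; apply/eqP; apply: contraT => xr.
by case: (@no3 r x y _ xy); rewrite lt_neqAle r_le andbT eq_sym.
Qed.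

Lemma le_bottomE (x y : X) : (x <= y) = (x == y) || (x == r).
Proof.
case: (eqVneq x r) => [->|xr]; first by rewrite r_le orbT.
rewrite orbF le_eqVlt; apply/orP/idP => [[//|/lt_bottom_fst xE]|]; last by left.
by rewrite xE eqxx in xr.
Qed.

Lemma edge_fst (b : Bt X) : (val b).1 = r.
Proof. exact: lt_bottom_fst (valP b). Qed.

Lemma edge_snd_eq_r (b : Bt X) : ((val b).2 == r) = false.
Proof. by rewrite -(edge_fst b) gt_eqF ?(valP b). Qed.

Lemma edge_snd_inj : injective (fun b : Bt X => (val b).2).
Proof.
move=> b c /= E; apply: val_inj.
by rewrite [val b]surjective_pairing [val c]surjective_pairing E !edge_fst.
Qed.

Lemma edge_snd_onto (y : X) : y != r -> {b : Bt X | (val b).2 = y}.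
Proof.
move=> yr; have ry : r < y by rewrite lt_neqAle eq_sym yr r_le.
by exists (Sub (r, y) ry).
Qed.

Variable th : Bt X -> Bt X.
Hypothesis th_inj : injective th.

(* The image of y is the top of th (e_{r y}); r, which tops no edge, is sent to itself. *)
Definition induced_fun (y : X) : X :=
  if insub (r, y) is Some b then (val (th b)).2 else r.

Lemma induced_fun_r : induced_fun r = r.
Proof. by rewrite /induced_fun insubF // ltxx. Qed.

Lemma induced_fun_snd (b : Bt X) : induced_fun (val b).2 = (val (th b)).2.
Proof.
have rb : r < (val b).2 by rewrite -{1}(edge_fst b) (valP b).
rewrite /induced_fun insubT //=.
by congr (val (th _)).2; apply: val_inj; rewrite /= -(edge_fst b) -surjective_pairing.
Qed.

Lemma induced_fun_eq_r (y : X) : (induced_fun y == r) = (y == r).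
Proof.
case: (eqVneq y r) => [->|/edge_snd_onto [b <-]]; first by rewrite induced_fun_r eqxx.
by rewrite induced_fun_snd !edge_snd_eq_r.
Qed.

Lemma induced_fun_inj : injective induced_fun.
Proof.
move=> x y; case: (eqVneq x r) => [->|/edge_snd_onto [b <-]].
  by rewrite induced_fun_r => /esym/eqP; rewrite induced_fun_eq_r => /eqP.
case: (eqVneq y r) => [->|/edge_snd_onto [c <-]].
  by rewrite induced_fun_r => /eqP; rewrite induced_fun_eq_r edge_snd_eq_r.
by rewrite !induced_fun_snd => /edge_snd_inj /th_inj ->.
Qed.

Lemma in_P_bottom : in_P th.
Proof.
left; exists (perm induced_fun_inj); split=> [x y|b].
  by rewrite !permE !le_bottomE (inj_eq induced_fun_inj) induced_fun_eq_r.
rewrite !permE [val (th b)]surjective_pairing -induced_fun_snd.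
by rewrite !edge_fst induced_fun_r.
Qed.

End BottomStar.

Lemma Min_set1_bottom {d : Order.disp_t} (X : finPOrderType d) (r : X) :
  no_chain3 X -> Min_set X = [set r] -> forall x, r <= x.
Proof.
move=> no3 minE x; case: (boolP (x \in Min_set X)); first by rewrite minE inE => /eqP ->.
rewrite inE negb_forall => /existsP [z]; rewrite negbK => zx.
have : z \in Min_set X.
  by rewrite inE; apply/forallP => w; apply/negP => wz; apply: no3 wz zx.
by rewrite minE inE => /eqP <-; apply: ltW.
Qed.

Lemma in_P_Min_set1 {d : Order.disp_t} (X : finPOrderType d) (th : Bt X -> Bt X) :
  no_chain3 X -> #|Min_set X| = 1%N -> injective th -> in_P th.
Proof.
move=> no3 /eqP /cards1P [r minE].
exact: (in_P_bottom (Min_set1_bottom no3 minE) no3 (th := th)).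
Qed.

Section Duality.
Context {d : Order.disp_t} (X : finPOrderType d).

Definition dual_edge (b : Bt X) : Bt X^d := Sub ((val b).2, (val b).1) (valP b).
Definition undual_edge (b : Bt X^d) : Bt X := Sub ((val b).2, (val b).1) (valP b).

Lemma dual_edgeK : cancel dual_edge undual_edge.
Proof. by move=> b; apply: val_inj => /=; case: (val b). Qed.

Lemma undual_edgeK : cancel undual_edge dual_edge.
Proof. by move=> b; apply: val_inj => /=; case: (val b). Qed.

Lemma Max_set_top (r : X) : (forall x, x <= r) -> Max_set X = [set r].
Proof. exact: (@Min_set_bottom _ X^d). Qed.

Lemma no_chain3_dual : no_chain3 X -> no_chain3 X^d.
Proof. by move=> no3 x y z xy yz; apply: no3 yz xy. Qed.

Lemma in_P_dual (th : Bt X -> Bt X) :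
  in_P (dual_edge \o th \o undual_edge) -> in_P th.
Proof.
have thE b : val (th b) = ((val (th b)).1, (val (th b)).2) by case: (val (th b)).
case=> [[lam [lamE thlam]]|[lam [lamE thlam]]]; [left|right]; exists lam;
  split=> [x y|b]; try exact: lamE y x;
  by move: (thlam (dual_edge b)); rewrite /= dual_edgeK thE => -[-> ->].
Qed.

Lemma in_P_Max_set1 (th : Bt X -> Bt X) :
  no_chain3 X -> #|Max_set X| = 1%N -> injective th -> in_P th.
Proof.
move=> no3 max1 th_inj; apply: in_P_dual.
apply: in_P_Min_set1 (no_chain3_dual no3) max1 _.
by move=> b c /= /(can_inj dual_edgeK) /th_inj /(can_inj undual_edgeK).
Qed.

End Duality.

Section Zigzag.
Context {d : Order.disp_t} (X : finPOrderType d).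

(* The transposition of e_{a1 b1} and e_{a2 b1} fixes e_{a2 b2}: an automorphism would
   then fix a2 and send a1 to a2, an anti-automorphism would send a2 to both b1 and b2. *)
Lemma proper_zigzag_free : (forall th : {perm Bt X}, in_P th) -> zigzag_free X.
Proof.
move=> all_proper a1 b1 a2 b2 h1 h2 h3; apply/norP => -[n12 nb].
pose e1 : Bt X := Sub (a1, b1) h1; pose e2 : Bt X := Sub (a2, b1) h2.
pose e3 : Bt X := Sub (a2, b2) h3.
have e3_fixed : tperm e1 e2 e3 = e3.
  by apply: tpermD; rewrite -val_eqE /= xpair_eqE ?(negbTE n12) ?(negbTE nb) ?andbF.
case: (all_proper (tperm e1 e2)) => [[lam [_ thlam]]|[lam [_ thlam]]].
- move: (thlam e1) (thlam e3); rewrite /= tpermL e3_fixed => -[la1 _] [la2 _].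
  by move/perm_inj: (etrans (esym la1) la2) n12 => ->; rewrite eqxx.
- move: (thlam e2) (thlam e3); rewrite /= tpermR e3_fixed => -[_ la2] [_ la2'].
  by move: nb; rewrite la2 la2' eqxx.
Qed.

Hypotheses (conn : poset_connected X) (len1 : poset_length X = 1%N).

Lemma zigzag_free_Min_Max : zigzag_free X -> #|Min_set X| = 1%N \/ #|Max_set X| = 1%N.
Proof.
move=> zf; have no3 := length1_no_chain3 len1; have [a [b ab]] := length1_exists_lt len1.
case: (boolP [exists a', (a' != a) && (a' < b)]) => [|/existsPn lower_b].
  move=> /existsP [a' /andP [a'a a'b]].
- right; suff le_b x : x <= b by rewrite (Max_set_top le_b) cards1.
  apply: (@connected_closed _ X (<= b) conn _ b x (lexx b)) => {}x y /= xb.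
  case/comparable_ltP => [xy|yx]; last exact: le_trans yx xb.
  have {}xb : x < b.
    by rewrite lt_neqAle xb andbT; apply: contraTneq xy => ->; apply/negP; exact: no3 ab.
  have [a1 a1b a1x] : exists2 a1, a1 < b & a1 != x.
    by case: (eqVneq x a) => [->|xa]; [exists a' | exists a; rewrite // eq_sym].
  by case/orP: (zf _ _ _ _ a1b xb xy) => /eqP E; [rewrite E eqxx in a1x | rewrite E].
- left; suff le_a x : a <= x by rewrite (Min_set_bottom le_a) cards1.
  apply: (@connected_closed _ X (>= a) conn _ a x (lexx a)) => {}x y /= ax.
  case/comparable_leP => [xy|yx]; first exact: le_trans ax xy.
  have {}ax : a < x.
    by rewrite lt_neqAle ax andbT; apply: contraTneq yx => <-; apply/negP => ya; exact: no3 ya ab.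
  case/orP: (zf _ _ _ _ yx ax ab) => /eqP E; first by rewrite E.
  by move: (lower_b y); rewrite -E yx andbT negbK => /eqP ->.
Qed.

End Zigzag.

Theorem proposition4p6 (d : Order.disp_t) (X : finPOrderType d) :
  poset_connected X -> poset_length X = 1%N ->
  ((forall th : {perm Bt X}, in_M (fun b => th b) <-> in_P (fun b => th b)) <->
   (#|Min_set X| = 1%N \/ #|Max_set X| = 1%N)).
Proof.
move=> conn len1; split=> [M_iff_P|min_or_max th].
  apply: (zigzag_free_Min_Max conn len1); apply: proper_zigzag_free => th.
  exact/(M_iff_P th)/(in_M_all len1 conn).
split=> _; last exact (in_M_all len1 conn _).
have no3 := length1_no_chain3 len1.
by case: min_or_max => [min1|max1]; [apply: in_P_Min_set1 | apply: in_P_Max_set1] => //;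
  apply: perm_inj.
Qed.
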